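(* In the currency market model #1 described in the context, assume $\{\lambda^{ij}_t>0\}=\{\lambda^{ji}_t>0\}$ for all $i,j\le d$ and $t\in\mathbb T$. Then for every $t\in\mathbb T$ and every $\eta\in L^0(\mathbb M^d;\mathcal H_t)$ such that $F_t(\eta)\in N^0_t(F)$, one has $F_t(-\eta)=-F_t(\eta)$ a.s. (so condition $\mathbf{HN^0}$ holds, since $\mathcal A=\mathbb M^d$).
   Context: Let $T\in\mathbb N$, $\mathbb T=\{0,\dots,T\}$, $d\ge1$, $(\Omega,\mathcal F,\mathbb P)$ a complete probability space and $\mathbb H=(\mathcal H_t)_{t\in\mathbb T}$ a filtration with $\mathcal H_T\subset\mathcal F$. $\mathbb M^d$ denotes real $d\times d$ matrices, $\mathbb M^d_+$ those with nonnegative entries; $L^0(E;\mathcal G)$ denotes $E$-valued $\mathcal G$-measurable random variables. Let $S=(S_t)_{t\in\mathbb T}$ be an $\mathcal F$-measurable $(0,\infty)^d$-valued process and $\lambda=(\lambda_t)_{t\in\mathbb T}$ an $\mathcal F$-measurable $\mathbb M^d_+$-valued process (neither necessarily $\mathbb H$-adapted); set $\tau^{ji}_t=S^i_t/S^j_t$. For $\rho,\ell\in\mathbb M^d_+$ define $f(\cdot;\rho,\ell):\mathbb M^d\to\mathbb R^d$ by $f^i(a;\rho,\ell)=\sum_{j=1}^d a^{ji}\big(1+\ell^{ij}\mathbf 1_{\{a^{ji}<0\}}\big)-a^{ij}\rho^{ij}\big(1+\ell^{ij}\mathbf 1_{\{a^{ij}\ge0\}}\big)$, $i\le d$. Set $\mathcal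 A=\mathbb M^d$ and $F_t(a)=f(a;\tau_t,\lambda_t)$, $t\in\mathbb T$. Let $N_t(F)=\{F_t(\eta):\eta\in L^0(\mathbb M^d;\mathcal H_t)\}$ and $N^0_t(F)=N_t(F)\cap(-N_t(F))$. *)

From HB Require Import structures.
From mathcomp Require Import all_boot all_order all_algebra.
From mathcomp Require Import all_classical all_reals all_analysis.
Set Implicit Arguments. Unset Strict Implicit. Unset Printing Implicit Defensive.
Import Order.TTheory GRing.Theory Num.Theory.
Local Open Scope classical_set_scope.
Local Open Scope ring_scope.

Definition sub_sigma_algebra d (Omega : measurableType d) (G : set (set Omega)) :=
  sigma_algebra setT G /\ G `<=` measurable.

Definition filtration d (Omega : measurableType d) (T : nat)
    (H : nat -> set (set Omega)) :=
  (forall t, (t <= T)%N -> sub_sigma_algebra (H t)) /\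
  (forall s t, (s <= t)%N -> (t <= T)%N -> H s `<=` H t).

Definition Gmeas d (Omega : measurableType d) (R : realType)
    (G : set (set Omega)) (X : Omega -> R) :=
  forall B : set R, measurable B -> G (X @^-1` B).

Definition L0mx d (Omega : measurableType d) (R : realType) (n : nat)
    (G : set (set Omega)) (eta : Omega -> 'M[R]_n) :=
  forall i j, Gmeas G (fun w => eta w i j).

Definition ind {R : realType} (b : bool) : R := if b then 1 else 0.

Definition fcost (R : realType) (n : nat) (a rho l : 'M[R]_n) : 'rV[R]_n :=
  \row_(i < n) \sum_(j < n)
     (a j i * (1 + l i j * ind (a j i < 0))
      - a i j * rho i j * (1 + l i j * ind (0 <= a i j))).

Definition tau (R : realType) (n : nat) (s : 'rV[R]_n) : 'M[R]_n :=
  \matrix_(j < n, i < n) (s 0 i / s 0 j).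

Definition Fmap d (Omega : measurableType d) (R : realType) (n : nat)
    (S : nat -> Omega -> 'rV[R]_n) (lam : nat -> Omega -> 'M[R]_n) (t : nat)
    (eta : Omega -> 'M[R]_n) : Omega -> 'rV[R]_n :=
  fun w => fcost (eta w) (tau (S t w)) (lam t w).

(* X in N_t(F) (elements of L^0, i.e. up to P-a.s. equality) *)
Definition inN d (Omega : measurableType d) (R : realType) (n : nat)
    (P : probability Omega R) (H : nat -> set (set Omega))
    (S : nat -> Omega -> 'rV[R]_n) (lam : nat -> Omega -> 'M[R]_n) (t : nat)
    (X : Omega -> 'rV[R]_n) :=
  exists eta, L0mx (H t) eta /\ {ae P, forall w, X w = Fmap S lam t eta w}.

Definition inN0 d (Omega : measurableType d) (R : realType) (n : nat)
    (P : probability Omega R) (H : nat -> set (set Omega))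
    (S : nat -> Omega -> 'rV[R]_n) (lam : nat -> Omega -> 'M[R]_n) (t : nat)
    (X : Omega -> 'rV[R]_n) :=
  inN P H S lam t X /\ inN P H S lam t (fun w => - X w).

From HB Require Import structures.
From mathcomp Require Import all_boot all_order all_algebra.
From mathcomp Require Import all_classical all_reals all_analysis.
From mathcomp Require Import ring.
Import Order.TTheory GRing.Theory Num.Theory.
Local Open Scope classical_set_scope.
Local Open Scope ring_scope.

(* Valued at the prices [s], a transfer [a] loses the nonnegative amount
   [\sum_(i, j) fcost_loss a i j] to transaction costs, so [F(a)] has
   nonpositive value.  If [F(a) = - F(b)], both values vanish, hence [a] only
   moves money along pairs of currencies with zero cost in both directions
   (the supports of [l i j] and [l j i] agree), where [f] is odd. *)

Section CurrencyCost.
Variables (R : realType) (n : nat) (s : 'rV[R]_n) (l : 'M[R]_n).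

Definition portfolio_value (x : 'rV[R]_n) : R := \sum_i s 0 i * x 0 i.

Definition fcost_loss (a : 'M[R]_n) (i j : 'I_n) : R :=
  s 0 j * (a i j * (l i j * ind (0 <= a i j) - l j i * ind (a i j < 0))).

Lemma portfolio_valueN x : portfolio_value (- x) = - portfolio_value x.
Proof. by rewrite /portfolio_value -sumrN; apply: eq_bigr => i _; rewrite mxE mulrN. Qed.

Hypothesis s_gt0 : forall i, 0 < s 0 i.
Hypothesis l_ge0 : forall i j, 0 <= l i j.

Lemma fcost_loss_ge0 a i j : 0 <= fcost_loss a i j.
Proof.
rewrite /fcost_loss /ind; apply: mulr_ge0; first exact: ltW.
case: (ltP (a i j) 0) => [a_lt0|a_ge0].
  by rewrite mulr0 mulr1 sub0r mulrN -mulNr mulr_ge0 // oppr_ge0 ltW.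
by rewrite mulr1 mulr0 subr0 mulr_ge0.
Qed.

Lemma portfolio_value_fcost a :
  portfolio_value (fcost a (tau s) l) = - \sum_i \sum_j fcost_loss a i j.
Proof.
pose gain i j := s 0 i * (a j i * (1 + l i j * ind (a j i < 0))).
pose paid i j := s 0 i * (a i j * tau s i j * (1 + l i j * ind (0 <= a i j))).
have -> : portfolio_value (fcost a (tau s) l) =
    \sum_i \sum_j gain i j - \sum_i \sum_j paid i j.
  rewrite -sumrB; apply: eq_bigr => i _; rewrite mxE mulr_sumr -sumrB.
  by apply: eq_bigr => j _; rewrite mulrBr.
rewrite [X in X - _]exchange_big -sumrB -sumrN; apply: eq_bigr => i _.
rewrite -sumrB -sumrN; apply: eq_bigr => j _.
rewrite /gain /paid /fcost_loss !mxE; have := s_gt0 i; have := s_gt0 j => sj si.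
by field; rewrite gt_eqF.
Qed.

Lemma portfolio_value_fcost_le0 a : portfolio_value (fcost a (tau s) l) <= 0.
Proof.
rewrite portfolio_value_fcost oppr_le0.
by do 2!apply: sumr_ge0 => ? _; apply: fcost_loss_ge0.
Qed.

Hypothesis l_supp_sym : forall i j, 0 < l i j -> 0 < l j i.

Lemma l_eq0_sym i j : l i j = 0 -> l j i = 0.
Proof.
move=> lij0; apply/eqP; rewrite eq_le l_ge0 andbT leNgt; apply/negP => /l_supp_sym.
by rewrite lij0 ltxx.
Qed.

Lemma fcost_value0_frictionless a :
  portfolio_value (fcost a (tau s) l) = 0 ->
  forall i j, a i j != 0 -> l i j = 0 /\ l j i = 0.
Proof.
rewrite portfolio_value_fcost => /eqP; rewrite oppr_eq0 => /eqP loss0 i j aij_neq0.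
have loss_i0 : \sum_j fcost_loss a i j = 0.
  apply: (psumr_eq0P _ loss0) => // k _.
  by apply: sumr_ge0 => ? _; apply: fcost_loss_ge0.
have /eqP : fcost_loss a i j = 0.
  by apply: (psumr_eq0P _ loss_i0) => // k _; apply: fcost_loss_ge0.
rewrite /fcost_loss /ind !mulf_eq0 gt_eqF //= (negbTE aij_neq0) /=.
case: (ltP (a i j) 0) => _.
  rewrite mulr0 mulr1 sub0r oppr_eq0 => /eqP lji0.
  by split => //; apply: l_eq0_sym.
rewrite mulr1 mulr0 subr0 => /eqP lij0.
by split => //; apply: l_eq0_sym.
Qed.

Lemma fcost_oppr_frictionless (a : 'M[R]_n) :
  (forall i j, a i j != 0 -> l i j = 0 /\ l j i = 0) ->
  fcost (- a) (tau s) l = - fcost a (tau s) l.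
Proof.
move=> frictionless; apply/rowP => i; rewrite !mxE -sumrN.
apply: eq_bigr => j _; rewrite !mxE.
have [->|/frictionless[_ lij0]] := eqVneq (a j i) 0;
  have [->|/frictionless[lij0' _]] := eqVneq (a i j) 0;
  rewrite ?oppr0 ?mul0r ?lij0 ?lij0'; ring.
Qed.

Lemma fcost_oppr_of_oppr (a b : 'M[R]_n) :
  fcost a (tau s) l = - fcost b (tau s) l ->
  fcost (- a) (tau s) l = - fcost a (tau s) l.
Proof.
move=> Fab; apply/fcost_oppr_frictionless/fcost_value0_frictionless.
have Va_ge0 : 0 <= portfolio_value (fcost a (tau s) l).
  by rewrite Fab portfolio_valueN oppr_ge0 portfolio_value_fcost_le0.
by apply/eqP; rewrite eq_le Va_ge0 portfolio_value_fcost_le0.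
Qed.

End CurrencyCost.

Theorem mainTheorem9 (T : nat) (n : nat) (dsp : measure_display)
    (Omega : measurableType dsp) (R : realType) (P : probability Omega R)
    (H : nat -> set (set Omega))
    (S : nat -> Omega -> 'rV[R]_n) (lam : nat -> Omega -> 'M[R]_n) :
  (0 < n)%N ->
  measure_is_complete P ->
  filtration T H ->
  (forall t, (t <= T)%N -> forall i, measurable_fun setT (fun w => S t w 0 i)) ->
  (forall t, (t <= T)%N -> forall w i, 0 < S t w 0 i) ->
  (forall t, (t <= T)%N -> forall i j, measurable_fun setT (fun w => lam t w i j)) ->
  (forall t, (t <= T)%N -> forall w i j, 0 <= lam t w i j) ->
  (forall t, (t <= T)%N -> forall i j,
      [set w | 0 < lam t w i j] = [set w | 0 < lam t w j i]) ->
  forall t, (t <= T)%N ->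
  forall eta : Omega -> 'M[R]_n, L0mx (H t) eta ->
  inN0 P H S lam t (Fmap S lam t eta) ->
  {ae P, forall w, Fmap S lam t (fun w' => - eta w') w = - Fmap S lam t eta w}.
Proof.
move=> _ _ _ _ S_gt0 _ lam_ge0 lam_supp t tT eta _ [_ [xi [_ F_opp]]].
apply: filterS F_opp => w; rewrite /Fmap /= => Fw.
apply: (@fcost_oppr_of_oppr R n _ _ _ _ _ (eta w) (xi w)).
- by move=> i; apply: S_gt0.
- by move=> i j; apply: lam_ge0.
- move=> i j lij_gt0; have : [set w | 0 < lam t w i j] w by [].
  by rewrite lam_supp.
- by rewrite -Fw opprK.
Qed.
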